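(* Let $W$ be a symmetric binary-input discrete memoryless channel with finite output alphabet $\mathcal{Y}$, let $A$ be an invertible $N\times N$ matrix over $\mathbb{F}_2$, and let $P$ be an $N\times N$ permutation matrix. Then for every $\mathbf{y}\in\mathcal{Y}^N$, $\mathbf{y}$ and $T_P(\mathbf{y})$ are probability equivalent on $A$, i.e. $W_A(T_P(\mathbf{y}))=W_A(\mathbf{y})$.
   Context: Symmetric channel: $W(y|x)$, $x\in\{0,1\}$, $y\in\mathcal{Y}$, and there is an involution $y\mapsto 1\cdot y$ of $\mathcal{Y}$ with $W(1\cdot y|0)=W(y|1)$ and $W(1\cdot y|1)=W(y|0)$; set $0\cdot y=y$. For $\mathbf{u}\in\mathbb{F}_2^N$, $\mathbf{u}\cdot\mathbf{y}=(u_1\cdot y_1,\dots,u_N\cdot y_N)$. $W^N(\mathbf{y}|\mathbf{x})=\prod_j W(y_j|x_j)$. For a binary matrix $A$ with $N$ columns, $W_A(\mathbf{y})=\frac{1}{2^{N-1}}\sum_{\mathbf{u}\in\mathrm{row}(A)}W^N(\mathbf{u}\cdot\mathbf{y}|\mathbf{0})$, where $\mathrm{row}(A)$ is the row space over $\mathbb{F}_2$; $\mathbf{y},\mathbf{v}$ are probability equivalent on $A$ if $W_A(\mathbf{y})=W_A(\mathbf{v})$. $T_P(\mathbf{y})=\mathbf{y}P$ is the coordinate permutation of $\mathbf{y}$ given by $P$. *)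

From HB Require Import structures.
From mathcomp Require Import all_boot all_order all_algebra all_fingroup.
From mathcomp Require Import reals.
Set Implicit Arguments. Unset Strict Implicit. Unset Printing Implicit Defensive.
Import Order.TTheory GRing.Theory Num.Theory.
Local Open Scope ring_scope.

(* Binary input alphabet {0,1} is encoded as bool (false = 0, true = 1).
   A channel is W : bool -> Y -> R, W x y = W(y|x). *)

Definition is_channel (R : realType) (Y : finType) (W : bool -> Y -> R) : Prop :=
  (forall x y, 0 <= W x y) /\ (forall x, \sum_(y : Y) W x y = 1).

Definition symmetric_channel (R : realType) (Y : finType) (W : bool -> Y -> R)
  (act : Y -> Y) : Prop :=
  is_channel W /\ involutive act /\
  (forall y, W false (act y) = W true y) /\ (forall y, W true (act y) = W false y).

(* u . y = (u_1 . y_1, ..., u_N . y_N), with 0.y = y and 1.y = act y *)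
Definition vact (Y : finType) (act : Y -> Y) (N : nat)
  (u : 'rV['F_2]_N) (y : 'I_N -> Y) : 'I_N -> Y :=
  fun j => if u 0 j == 1 then act (y j) else y j.

Definition WN0 (R : realType) (Y : finType) (W : bool -> Y -> R) (N : nat)
  (y : 'I_N -> Y) : R :=
  \prod_(j < N) W false (y j).

Definition W_A (R : realType) (Y : finType) (W : bool -> Y -> R) (act : Y -> Y)
  (N : nat) (A : 'M['F_2]_N) (y : 'I_N -> Y) : R :=
  (2%:R ^+ N.-1)^-1 * \sum_(u : 'rV['F_2]_N | (u <= A)%MS) WN0 W (vact act u y).

(* T_P(y) = y P : (y P)_j = y_i for the unique i with P_ij = 1 *)
Definition T_P (Y : finType) (N : nat) (P : 'M['F_2]_N) (y : 'I_N -> Y) : 'I_N -> Y :=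
  fun j => y (odflt j [pick i | P i j == 1]).

From HB Require Import structures.
From mathcomp Require Import all_boot all_order all_algebra all_fingroup.
From mathcomp Require Import reals.
From Stdlib Require Import FunctionalExtensionality.
Import Order.TTheory GRing.Theory Num.Theory.
Local Open Scope ring_scope.

(* When A is invertible its row space is all of F_2^N, so W_A(y)
   is a normalised sum of W^N(u.y|0) over every u.  Permuting the coordinates
   of y by s and re-indexing u by the same permutation turns each summand into
   a product of the same factors in another order. *)

Section PermutationInvariance.

Variables (R : realType) (Y : finType) (W : bool -> Y -> R) (act : Y -> Y).
Variable N : nat.
Implicit Types (s : {perm 'I_N}) (u : 'rV['F_2]_N) (y : 'I_N -> Y).

Lemma T_P_perm_mx s y : T_P (perm_mx s) y = y \o (s^-1)%g.
Proof.
apply: functional_extensionality => j; rewrite /T_P /=.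
case: pickP => [i /eqP | no_pre] /=.
  by rewrite /perm_mx !mxE; case: eqP => // <- _; rewrite permK.
by have := no_pre (s^-1 j)%g; rewrite /perm_mx !mxE permKV eqxx.
Qed.

Lemma WN0_perm s y : WN0 W (y \o s) = WN0 W y.
Proof. by rewrite /WN0 [RHS](reindex_inj (@perm_inj _ s)). Qed.

Lemma vact_col_perm s u y :
  vact act (col_perm s u) y = vact act u (y \o (s^-1)%g) \o s.
Proof.
by apply: functional_extensionality => j; rewrite /vact /= mxE permK.
Qed.

Lemma col_perm_inj s : injective (@col_perm 'F_2 1 N s).
Proof.
move=> u v /matrixP eq_uv; apply/matrixP => i j.
by have := eq_uv i (s^-1 j)%g; rewrite !mxE permKV.
Qed.

Lemma sum_WN0_vact_perm s y :
  \sum_u WN0 W (vact act u (y \o s)) = \sum_u WN0 W (vact act u y).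
Proof.
rewrite [RHS](reindex_inj (col_perm_inj s^-1%g)); apply: eq_bigr => u _.
by rewrite vact_col_perm WN0_perm invgK.
Qed.

Lemma W_A_unitmx (A : 'M['F_2]_N) y : A \in unitmx ->
  W_A W act A y = (2%:R ^+ N.-1)^-1 * \sum_u WN0 W (vact act u y).
Proof.
move=> unitA; rewrite /W_A (eq_bigl xpredT) // => u.
by apply: submx_full; rewrite row_full_unit.
Qed.

End PermutationInvariance.

Theorem corollary1 (R : realType) (Y : finType) (W : bool -> Y -> R) (act : Y -> Y)
  (N : nat) (A P : 'M['F_2]_N) :
  symmetric_channel W act ->
  A \in unitmx ->
  is_perm_mx P ->
  forall y : 'I_N -> Y, W_A W act A (T_P P y) = W_A W act A y.
Proof.
move=> _ unitA /is_perm_mxP [s ->] y.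
by rewrite T_P_perm_mx !W_A_unitmx // sum_WN0_vact_perm.
Qed.
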